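(* Let $S_j$ be local potentials satisfying (A)–(E), and let $(p_1,q_1),\dots,(p_d,q_d)\in\mathbb{Z}^d\times\mathbb{Z}$ with $p_1,\dots,p_d$ linearly independent. If $x\in\mathbb{X}_{p,q}$ is a global minimizer, then $x$ minimizes $W_{p,q}$ on $\mathbb{X}_{p,q}$.
   Context: Notation: $\|i\|=\sum_{k=1}^d|i_k|$, $B_j^r=\{k:\|k-j\|\le r\}$, $(\tau_{k,l}x)_i=x_{i+k}+l$. Local potentials $S_j:\mathbb{R}^{\mathbb{Z}^d}\to\mathbb{R}$, $j\in\mathbb{Z}^d$, satisfy: (A) there is $r\in(0,\infty)$ and $C^2$ functions $s_j:\mathbb{R}^{B_j^r}\to\mathbb{R}$ with $S_j(x)=s_j(x|_{B_j^r})$; (B) $S_j(\tau_{k,l}x)=S_{j+k}(x)$; (C) each $S_j$ is bounded below and $S_j(x)\to\infty$ as $|x_k-x_j|\to\infty$ whenever $\|k-j\|=1$; (D) $\partial_{i,k}S_j\le0$ for $i\ne k$, and $\partial_{i,k}S_i<0$ when $\|i-k\|=1$; (E) $|\partial_{i,k}S_j|\le C$ uniformly. With $p$ the matrix with columns $p_j$: $B_p=p([0,1)^d)\cap\mathbb{Z}^d$, $\mathbb{X}_{p,q}=\{x:\tau_{p_j,q_j}x=x\ \forall j\}$, $W_{p,q}(x)=\sum_{j\in B_p}S_j(x)$. For finite $B\subset\mathbb{Z}^d$: $W_B(x)=\sum_{j\in B}S_j(x)$ and $\mathring{B}^{(r)}=\{i\in B:B_i^r\subset B\}$. A configuration $x$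 is a global minimizer if $W_B(x+y)\ge W_B(x)$ for every finite $B$ and every $y$ with support in $\mathring{B}^{(r)}$. *)

From Stdlib Require Vectors.Fin.
From Stdlib Require Import Reals ZArith List ClassicalEpsilon.
Open Scope R_scope.

Definition Vec (d : nat) := Fin.t d -> Z.
Definition Config (d : nat) := Vec d -> R.

Fixpoint sumFinR (n : nat) : (Fin.t n -> R) -> R :=
  match n with
  | O => fun _ => 0
  | S m => fun f => f Fin.F1 + sumFinR m (fun i => f (Fin.FS i))
  end.

Fixpoint sumFinZ (n : nat) : (Fin.t n -> Z) -> Z :=
  match n with
  | O => fun _ => 0%Z
  | S m => fun f => (f Fin.F1 + sumFinZ m (fun i => f (Fin.FS i)))%Z
  end.

Definition vadd {d} (i k : Vec d) : Vec d := fun m => (i m + k m)%Z.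
Definition vsub {d} (i k : Vec d) : Vec d := fun m => (i m - k m)%Z.

Definition norm1 {d} (i : Vec d) : Z := sumFinZ d (fun m => Z.abs (i m)).

Definition ball {d} (j : Vec d) (r : R) (k : Vec d) : Prop :=
  IZR (norm1 (vsub k j)) <= r.

Definition tau {d} (k : Vec d) (l : Z) (x : Config d) : Config d :=
  fun i => x (vadd i k) + IZR l.

Definition upd {d} (x : Config d) (i : Vec d) (t : R) : Config d :=
  fun k => if excluded_middle_informative (k = i) then t else x k.

Definition has_partial {d} (f : Config d -> R) (i : Vec d) (x : Config d) (l : R)
  : Prop := derivable_pt_lim (fun t => f (upd x i t)) (x i) l.

Definition cont_wrt {d} (B : Vec d -> Prop) (g : Config d -> R) : Prop :=
  forall x eps, 0 < eps -> exists delta, 0 < delta /\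
    forall y, (forall k, B k -> Rabs (y k - x k) < delta) -> Rabs (g y - g x) < eps.

(* f (which depends only on the coordinates in B) is C^2 as a function of
   the finitely many variables (x_k)_{k in B}: all partial derivatives of
   order <= 2 exist and are continuous. *)
Definition C2_wrt {d} (B : Vec d -> Prop) (f : Config d -> R) : Prop :=
  exists (D1 : Vec d -> Config d -> R) (D2 : Vec d -> Vec d -> Config d -> R),
    (forall k x, has_partial f k x (D1 k x)) /\
    (forall i k x, has_partial (D1 k) i x (D2 i k x)) /\
    cont_wrt B f /\
    (forall k, cont_wrt B (D1 k)) /\
    (forall i k, cont_wrt B (D2 i k)).

(* d_{i,k} f (x) = l : second partial derivative, first in x_k then in x_i *)
Definition partial2 {d} (f : Config d -> R) (i k : Vec d) (x : Config d) (l : R)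
  : Prop :=
  exists D1 : Config d -> R,
    (forall y, has_partial f k y (D1 y)) /\ has_partial D1 i x l.

Definition condA {d} (r : R) (S : Vec d -> Config d -> R) : Prop :=
  0 < r /\
  forall j, (forall x y, (forall k, ball j r k -> x k = y k) -> S j x = S j y)
            /\ C2_wrt (ball j r) (S j).

Definition condB {d} (S : Vec d -> Config d -> R) : Prop :=
  forall j k l x, S j (tau k l x) = S (vadd j k) x.

Definition condC {d} (S : Vec d -> Config d -> R) : Prop :=
  forall j, (exists m, forall x, m <= S j x) /\
    forall k, norm1 (vsub k j) = 1%Z ->
      forall M, exists R0, forall x, R0 < Rabs (x k - x j) -> M < S j x.

Definition condD {d} (S : Vec d -> Config d -> R) : Prop :=
  (forall j i k x l, i <> k -> partial2 (S j) i k x l -> l <= 0) /\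
  (forall i k x l, norm1 (vsub i k) = 1%Z -> partial2 (S i) i k x l -> l < 0).

Definition condE {d} (S : Vec d -> Config d -> R) : Prop :=
  exists C, forall j i k x l, partial2 (S j) i k x l -> Rabs l <= C.

Definition sum_list (l : list R) : R := fold_right Rplus 0 l.

(* W_B(x) = sum_{j in B} S_j(x), for a finite B given as a duplicate-free list *)
Definition W_B {d} (S : Vec d -> Config d -> R) (B : list (Vec d)) (x : Config d)
  : R := sum_list (map (fun j => S j x) B).

(* sum over a finite set P of lattice points (via a chosen duplicate-free
   enumeration of P; independent of the choice when P is finite) *)
Definition finsum {d} (P : Vec d -> Prop) (f : Vec d -> R) : R :=
  sum_list (map f (epsilon (inhabits (@nil (Vec d)))
                     (fun l => NoDup l /\ forall j, In j l <-> P j))).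

Definition interior {d} (r : R) (B : list (Vec d)) (i : Vec d) : Prop :=
  In i B /\ forall k, ball i r k -> In k B.

Definition cfg_add {d} (x y : Config d) : Config d := fun i => x i + y i.

Definition global_minimizer {d} (r : R) (S : Vec d -> Config d -> R)
  (x : Config d) : Prop :=
  forall (B : list (Vec d)) (y : Config d), NoDup B ->
    (forall i, y i <> 0 -> interior r B i) ->
    W_B S B x <= W_B S B (cfg_add x y).

(* p j is the j-th column p_j of the matrix p *)
Definition lin_indep {d} (p : Fin.t d -> Vec d) : Prop :=
  forall c : Fin.t d -> R,
    (forall m, sumFinR d (fun j => c j * IZR (p j m)) = 0) -> forall j, c j = 0.

Definition Bp {d} (p : Fin.t d -> Vec d) (k : Vec d) : Prop :=
  exists t : Fin.t d -> R, (forall j, 0 <= t j < 1) /\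
    forall m, IZR (k m) = sumFinR d (fun j => t j * IZR (p j m)).

Definition Xpq {d} (p : Fin.t d -> Vec d) (q : Fin.t d -> Z) (x : Config d) : Prop :=
  forall j, tau (p j) (q j) x = x.

Definition Wpq {d} (S : Vec d -> Config d -> R) (p : Fin.t d -> Vec d)
  (x : Config d) : R := finsum (Bp p) (fun j => S j x).

(* Let x in X_{p,q} be a global minimizer, let y in X_{p,q}, and suppose
   W_{p,q}(y) < W_{p,q}(x).  The lattice p Z^d acts on X_{p,q} by
   x_{i + p n} = x_i - q.n, and by (B) the potentials are invariant along
   this action, so the energy of x on the union of the N^d translates
   b + p n (b in B_p, n in [0,N)^d) of the fundamental domain is
   N^d W_{p,q}(x).  The test perturbation equals y - x on the translates
   whose cell index n lies at distance >= K from the boundary of the box and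
   vanishes elsewhere, where K bounds how far (in cell index) an r-ball can
   reach.  Cells at distance >= 2K see only y and contribute W_{p,q}(y);
   the O(N^{d-1}) remaining cells contribute at most a constant each, since
   only finitely many local patterns "x glued to y" occur.  For N large the
   perturbation lowers the energy, contradicting global minimality.  Only
   (A) (locality) and (B) (translation covariance) are used. *)

From Pilot Require Import Defs.
From Stdlib Require Vectors.Fin.
From Stdlib Require Import Reals ZArith List Lia Lra.
From Stdlib Require Import FunctionalExtensionality Permutation ClassicalEpsilon.
From mathcomp Require ssreflect ssrbool ssrfun eqtype ssrnat fintype bigop ssralg matrix Rstruct.
Open Scope R_scope.

Lemma sum_list_app (l1 l2 : list R) : sum_list (l1 ++ l2) = sum_list l1 + sum_list l2.
Proof. induction l1; simpl. ring. rewrite IHl1. ring. Qed.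

Lemma sum_map_plus {A} (f g : A -> R) l :
  sum_list (map (fun a => f a + g a) l) = sum_list (map f l) + sum_list (map g l).
Proof. induction l; simpl. ring. rewrite IHl. ring. Qed.

Lemma sum_map_scal {A} (c : R) (f : A -> R) l :
  sum_list (map (fun a => c * f a) l) = c * sum_list (map f l).
Proof. induction l; simpl. ring. rewrite IHl. ring. Qed.

Lemma sum_map_ext {A} (f g : A -> R) l :
  (forall a, In a l -> f a = g a) -> sum_list (map f l) = sum_list (map g l).
Proof. induction l; simpl; intros H. reflexivity. rewrite H, IHl; auto. Qed.

Lemma sum_map_lincomb {A} (c : R) (f g : A -> R) l :
  sum_list (map (fun a => f a - c * g a) l) = sum_list (map f l) - c * sum_list (map g l).
Proof. induction l; simpl. ring. rewrite IHl. ring. Qed.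

Lemma sum_map_le {A} (f g : A -> R) l :
  (forall a, In a l -> f a <= g a) -> sum_list (map f l) <= sum_list (map g l).
Proof.
  induction l; simpl; intros H. lra.
  assert (f a <= g a) by auto. assert (sum_list (map f l) <= sum_list (map g l)) by auto. lra.
Qed.

Lemma sum_map_const {A} (c : R) (l : list A) :
  sum_list (map (fun _ => c) l) = INR (length l) * c.
Proof. induction l; simpl map; simpl length. simpl; ring. rewrite S_INR; simpl. rewrite IHl; ring. Qed.

Lemma sum_map_nonneg {A} (f : A -> R) l :
  (forall a, In a l -> 0 <= f a) -> 0 <= sum_list (map f l).
Proof. intros H. rewrite <- (Rmult_0_r (INR (length l))), <- sum_map_const. now apply sum_map_le. Qed.

Lemma sum_map_swap {A B} (f : A -> B -> R) la lb :
  sum_list (map (fun a => sum_list (map (fun b => f a b) lb)) la) =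
  sum_list (map (fun b => sum_list (map (fun a => f a b) la)) lb).
Proof.
  induction la; simpl.
  - induction lb; simpl; auto. rewrite <- IHlb. ring.
  - rewrite IHla, <- sum_map_plus. reflexivity.
Qed.

Lemma sum_map_term_le {A} (f : A -> R) l a :
  (forall b, In b l -> 0 <= f b) -> In a l -> f a <= sum_list (map f l).
Proof.
  induction l as [|b l IH]; simpl; intros H Hin. contradiction.
  assert (0 <= f b) by auto.
  assert (0 <= sum_list (map f l)) by (apply sum_map_nonneg; auto).
  destruct Hin as [->|Hin]. lra.
  assert (f a <= sum_list (map f l)) by auto. lra.
Qed.

Lemma sum_flat_map {A B} (f : A -> list B) (g : B -> R) l :
  sum_list (map g (flat_map f l)) = sum_list (map (fun a => sum_list (map g (f a))) l).
Proof. induction l; simpl. reflexivity. rewrite map_app, sum_list_app, IHl. reflexivity. Qed.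

Lemma sum_split_bound {A} (g : A -> R) (P : A -> bool) (a c : R) l :
  (forall n, In n l -> if P n then g n = a else g n <= c) ->
  sum_list (map g l) <=
    a * INR (length (filter P l)) + c * (INR (length l) - INR (length (filter P l))).
Proof.
  induction l as [|n l IH]; intros H. simpl. lra.
  simpl map; simpl filter; simpl sum_list.
  pose proof (IH (fun m h => H m (or_intror h))) as IH'.
  specialize (H n (or_introl eq_refl)).
  destruct (P n); simpl length; rewrite !S_INR; lra.
Qed.

Lemma sum_delta {A} (eqd : forall a b : A, {a = b} + {a <> b}) (g : A -> R) l m :
  NoDup l -> In m l ->
  sum_list (map (fun m' => g m' * (if eqd m m' then 1 else 0)) l) = g m.
Proof.
  induction l as [|a l IH]; simpl; intros Hn Hin. contradiction.
  inversion Hn; subst.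
  destruct (eqd m a) as [<-|ne].
  - rewrite (sum_map_ext _ (fun _ => 0)), sum_map_const. ring.
    intros b Hb. destruct (eqd m b); [subst; contradiction|ring].
  - destruct Hin as [->|Hin]. contradiction. rewrite IH; auto. ring.
Qed.

Lemma Rabs_sum_list {A} (f : A -> R) l :
  Rabs (sum_list (map f l)) <= sum_list (map (fun a => Rabs (f a)) l).
Proof.
  induction l; simpl. rewrite Rabs_R0; lra.
  eapply Rle_trans. apply Rabs_triang. lra.
Qed.

Definition sumZ (l : list Z) : Z := fold_right Z.add 0%Z l.

Lemma IZR_sumZ {A} (f : A -> Z) l :
  IZR (sumZ (map f l)) = sum_list (map (fun a => IZR (f a)) l).
Proof. induction l; simpl. reflexivity. rewrite plus_IZR, IHl. reflexivity. Qed.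

Lemma sumZ_term_le {A} (f : A -> Z) l a :
  (forall b, In b l -> (0 <= f b)%Z) -> In a l -> (f a <= sumZ (map f l))%Z.
Proof.
  intros H Hin. apply le_IZR. rewrite IZR_sumZ.
  apply (sum_map_term_le (fun b => IZR (f b))); auto. intros; apply IZR_le; auto.
Qed.

Fixpoint maxlist (l : list R) : R :=
  match l with nil => 0 | a :: l => Rmax a (maxlist l) end.

Lemma maxlist_ge l a : In a l -> a <= maxlist l.
Proof.
  induction l; simpl; intros H. contradiction.
  destruct H as [->|H]. apply Rmax_l. eapply Rle_trans. apply IHl; auto. apply Rmax_r.
Qed.

Lemma NoDup_map_inj {A B} (f : A -> B) l :
  (forall a b, In a l -> In b l -> f a = f b -> a = b) -> NoDup l -> NoDup (map f l).
Proof.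
  induction l as [|a l IH]; simpl; intros Hi Hn. constructor.
  inversion Hn; subst. constructor.
  - intros Hin. apply in_map_iff in Hin as [b [e Hb]].
    assert (b = a) by (apply Hi; auto). subst; contradiction.
  - apply IH; auto.
Qed.

Lemma NoDup_flat_map {A B} (f : A -> list B) l :
  NoDup l -> (forall a, In a l -> NoDup (f a)) ->
  (forall a a' b, In a l -> In a' l -> In b (f a) -> In b (f a') -> a = a') ->
  NoDup (flat_map f l).
Proof.
  induction l as [|a l IH]; simpl; intros Hn Hf Hd. constructor.
  inversion Hn; subst. apply NoDup_app.
  - apply Hf; auto.
  - apply IH; auto. intros a1 a2 b Ha1 Ha2. apply Hd; auto.
  - intros b Hb Hb'. apply in_flat_map in Hb' as [a' [Ha' Hb']].
    assert (a = a') by (apply (Hd a a' b); auto). subst; contradiction.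
Qed.

Lemma length_flat_map_const {A B} (f : A -> list B) l k :
  (forall a, In a l -> length (f a) = k) -> length (flat_map f l) = (length l * k)%nat.
Proof. induction l; simpl; intros H. reflexivity. rewrite length_app, H, IHl; auto. Qed.

Fixpoint sublists {A} (l : list A) : list (list A) :=
  match l with
  | nil => nil :: nil
  | a :: l => sublists l ++ map (cons a) (sublists l)
  end.

Lemma filter_in_sublists {A} (f : A -> bool) l : In (filter f l) (sublists l).
Proof.
  induction l; simpl. auto.
  destruct (f a); apply in_or_app; [right; apply in_map|left]; auto.
Qed.

Definition decb (P : Prop) : bool := if excluded_middle_informative P then true else false.

Lemma decb_true (P : Prop) : decb P = true <-> P.
Proof. unfold decb. destruct (excluded_middle_informative P); split; auto; discriminate. Qed.

Fixpoint enumFin (d : nat) : list (Fin.t d) :=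
  match d with O => nil | S n => Fin.F1 :: map Fin.FS (enumFin n) end.

Lemma enumFin_all d (i : Fin.t d) : In i (enumFin d).
Proof. induction i; simpl. auto. right. apply in_map. auto. Qed.

Lemma enumFin_NoDup d : NoDup (enumFin d).
Proof.
  induction d; simpl; constructor.
  - intro H. apply in_map_iff in H as [i [e _]]. discriminate.
  - apply NoDup_map_inj; auto. intros a b _ _ e. apply Fin.FS_inj; auto.
Qed.

Lemma sumFinR_list d f : sumFinR d f = sum_list (map f (enumFin d)).
Proof. induction d; simpl. reflexivity. rewrite IHd, map_map. reflexivity. Qed.

Lemma sumFinZ_list d f : sumFinZ d f = sumZ (map f (enumFin d)).
Proof. induction d; simpl. reflexivity. rewrite IHd, map_map. reflexivity. Qed.

Lemma IZR_norm1 {d} (v : Vec d) : IZR (norm1 v) = sumFinR d (fun m => Rabs (IZR (v m))).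
Proof.
  unfold norm1. rewrite sumFinZ_list, IZR_sumZ, sumFinR_list.
  apply sum_map_ext; intros; apply abs_IZR.
Qed.

Lemma norm1_coord {d} (v : Vec d) m : (Z.abs (v m) <= norm1 v)%Z.
Proof.
  unfold norm1. rewrite sumFinZ_list. apply (sumZ_term_le (fun m => Z.abs (v m))).
  intros; lia. apply enumFin_all.
Qed.

Definition vcons {d} (h : Z) (v : Fin.t d -> Z) : Fin.t (S d) -> Z :=
  fun i => Fin.caseS' i (fun _ => Z) h v.

Lemma vcons_eta {d} (v : Fin.t (S d) -> Z) : v = vcons (v Fin.F1) (fun i => v (Fin.FS i)).
Proof. apply functional_extensionality. intro i. pattern i. apply Fin.caseS'; reflexivity. Qed.

Lemma vcons_inj {d} h h' (v v' : Fin.t d -> Z) : vcons h v = vcons h' v' -> h = h' /\ v = v'.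
Proof.
  intro e. split. exact (f_equal (fun f => f Fin.F1) e).
  apply functional_extensionality; intro i. exact (f_equal (fun f => f (Fin.FS i)) e).
Qed.

Definition zrange (a b : Z) : list Z :=
  map (fun k => (a + Z.of_nat k)%Z) (seq 0 (Z.to_nat (b - a))).

Lemma zrange_In a b z : In z (zrange a b) <-> (a <= z < b)%Z.
Proof.
  unfold zrange. rewrite in_map_iff. split.
  - intros [k [e Hk]]. apply in_seq in Hk. lia.
  - intros H. exists (Z.to_nat (z - a)). split. lia. apply in_seq. lia.
Qed.

Lemma zrange_NoDup a b : NoDup (zrange a b).
Proof. unfold zrange. apply NoDup_map_inj. intros; lia. apply seq_NoDup. Qed.

Lemma zrange_length a b : length (zrange a b) = Z.to_nat (b - a).
Proof. unfold zrange. rewrite length_map, length_seq. reflexivity. Qed.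

Fixpoint boxlist (a b : Z) (d : nat) : list (Fin.t d -> Z) :=
  match d with
  | O => (fun _ => 0%Z) :: nil
  | S n => flat_map (fun h => map (vcons h) (boxlist a b n)) (zrange a b)
  end.

Lemma boxlist_In a b d (v : Fin.t d -> Z) :
  In v (boxlist a b d) <-> (forall j, (a <= v j < b)%Z).
Proof.
  induction d; simpl.
  - split; intros. apply Fin.case0; auto.
    left. apply functional_extensionality. intro j; apply Fin.case0; auto.
  - rewrite in_flat_map. split.
    + intros [h [Hh Hv]]. apply in_map_iff in Hv as [w [<- Hw]].
      intro j. pattern j. apply Fin.caseS'; simpl.
      * apply zrange_In; auto.
      * intro i. apply IHd. auto.
    + intros H. exists (v Fin.F1). split. apply zrange_In; auto.
      apply in_map_iff. exists (fun i => v (Fin.FS i)). split.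
      symmetry; apply vcons_eta. apply IHd. auto.
Qed.

Lemma boxlist_NoDup a b d : NoDup (boxlist a b d).
Proof.
  induction d; simpl.
  - constructor. simpl; auto. constructor.
  - apply NoDup_flat_map. apply zrange_NoDup.
    + intros h _. apply NoDup_map_inj; auto. intros v w _ _ e. apply vcons_inj in e. tauto.
    + intros h h' v _ _ H1 H2. apply in_map_iff in H1 as [w [<- _]].
      apply in_map_iff in H2 as [w' [e _]]. apply vcons_inj in e. destruct e; auto.
Qed.

Lemma boxlist_length a b d : length (boxlist a b d) = (Z.to_nat (b - a) ^ d)%nat.
Proof.
  induction d; simpl. reflexivity.
  rewrite (length_flat_map_const _ _ (length (boxlist a b d))).
  - rewrite zrange_length, IHd. reflexivity.
  - intros; rewrite length_map; reflexivity.
Qed.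

Lemma filter_boxlist_length (a b a' b' : Z) d :
  (a <= a')%Z -> (b' <= b)%Z ->
  length (filter (fun n => decb (forall j, (a' <= n j < b')%Z)) (boxlist a b d)) =
  length (boxlist a' b' d).
Proof.
  intros Ha Hb. apply Permutation_length, NoDup_Permutation.
  - apply NoDup_filter, boxlist_NoDup.
  - apply boxlist_NoDup.
  - intro n. rewrite filter_In, decb_true, !boxlist_In. split.
    + intros [_ H]; exact H.
    + intros H. split; auto. intro j. specialize (H j). lia.
Qed.

Definition ballList {d} (b : Vec d) (r : R) : list (Vec d) :=
  map (vadd b) (boxlist (- up r) (up r + 1) d).

Lemma ballList_In {d} (b k : Vec d) r : ball b r k -> In k (ballList b r).
Proof.
  unfold ball, ballList. intros H. apply in_map_iff. exists (vsub k b). split.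
  - apply functional_extensionality; intro m; unfold vadd, vsub; lia.
  - apply boxlist_In. intro m. destruct (archimed r) as [Hu _].
    assert (Hm : IZR (Z.abs (vsub k b m)) < IZR (up r)).
    { eapply Rle_lt_trans. 2: exact Hu. eapply Rle_trans. 2: exact H.
      apply IZR_le, norm1_coord. }
    apply lt_IZR in Hm. lia.
Qed.

Definition is_right_inverse {d} (p : Fin.t d -> Vec d) (A : Fin.t d -> Fin.t d -> R) : Prop :=
  forall m m', sumFinR d (fun j => IZR (p j m) * A j m') = if Fin.eq_dec m m' then 1 else 0.

(* Linearly independent periods give an invertible matrix: if the rows of P
   are independent then det P <> 0, so P^-1 P = 1. *)
Module PeriodMatrix.
Import ssreflect ssrbool ssrfun eqtype ssrnat fintype bigop ssralg matrix Rstruct.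
Import GRing.Theory.
Local Open Scope ring_scope.

Definition ofOrd {d} (i : 'I_d) : Fin.t d := Fin.of_nat_lt (elimT ltP (ltn_ord i)).
Definition toOrd {d} (j : Fin.t d) : 'I_d := Ordinal (introT ltP (proj2_sig (Fin.to_nat j))).

Lemma ofOrdK {d} (j : Fin.t d) : ofOrd (toOrd j) = j.
Proof. rewrite /ofOrd /toOrd /= -[RHS]Fin.of_nat_to_nat_inv. apply: Fin.of_nat_ext. Qed.

Lemma toOrdK {d} (i : 'I_d) : toOrd (ofOrd i) = i.
Proof. apply: val_inj. by rewrite /ofOrd /toOrd /= Fin.to_nat_of_nat. Qed.

Lemma ofOrd_lift d (i : 'I_d) : ofOrd (lift ord0 i) = Fin.FS (ofOrd i).
Proof.
  rewrite /ofOrd. move: (elimT ltP (ltn_ord (lift ord0 i))).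
  have -> : (lift ord0 i : nat) = S i by [].
  move=> h /=. f_equal. apply: Fin.of_nat_ext.
Qed.

Lemma sumFinR_big d (f : Fin.t d -> R) : sumFinR d f = (\sum_(i < d) f (ofOrd i))%R.
Proof.
  elim: d f => [|d IH] f; first by rewrite big_ord0.
  rewrite big_ord_recl /= IH. congr (_ + _). apply: eq_bigr => i _. by rewrite ofOrd_lift.
Qed.

Lemma right_inverse_exists d (p : Fin.t d -> Vec d) :
  lin_indep p -> exists A, is_right_inverse p A.
Proof.
  move=> Hli.
  pose P : 'M[R]_d := \matrix_(j, m) IZR (p (ofOrd j) (ofOrd m)).
  have P_unit : P \in unitmx.
  { rewrite unitmxE unitfE. apply/negP => /det0P [v v_neq0 vP0].
    move/negP: v_neq0; apply; apply/eqP/matrixP => i j.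
    rewrite (ord1 i) !mxE -(toOrdK j). apply: (Hli (fun k => v ord0 (toOrd k))) => m. rewrite sumFinR_big.
    have := congr1 (fun M : 'rV_d => M ord0 (toOrd m)) vP0.
    rewrite !mxE /= => vP0m. rewrite -[RHS]vP0m.
    apply: eq_bigr => k _. by rewrite mxE toOrdK ofOrdK. }
  exists (fun j m' => invmx P (toOrd m') (toOrd j)) => m m'.
  have := congr1 (fun M : 'M_d => M (toOrd m') (toOrd m)) (mulVmx P_unit).
  rewrite !mxE => PinvP. rewrite sumFinR_big.
  transitivity (\sum_j invmx P (toOrd m') j * P j (toOrd m))%R.
  { apply: eq_bigr => i _. by rewrite mxE toOrdK ofOrdK mulrC. }
  rewrite PinvP.
  case: (Fin.eq_dec m m') => [<-|ne]; first by rewrite eqxx.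
  case: eqP => // e. by case: ne; rewrite -(ofOrdK m) -(ofOrdK m') e.
Qed.
End PeriodMatrix.

Definition lv {d} (p : Fin.t d -> Vec d) (n : Fin.t d -> Z) : Vec d :=
  fun m => sumFinZ d (fun j => (n j * p j m)%Z).
Definition lq {d} (q : Fin.t d -> Z) (n : Fin.t d -> Z) : Z :=
  sumFinZ d (fun j => (n j * q j)%Z).

Definition shift_period {d} (x : Config d) (k : Vec d) (c : R) : Prop :=
  forall i, x (vadd i k) = x i - c.

Lemma shift_period_0 {d} (x : Config d) : shift_period x (fun _ => 0%Z) 0.
Proof.
  intro i. replace (vadd i (fun _ => 0%Z)) with i. ring.
  apply functional_extensionality; intro m; unfold vadd; lia.
Qed.

Lemma shift_period_add {d} (x : Config d) a b ca cb :
  shift_period x a ca -> shift_period x b cb ->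
  shift_period x (fun m => (a m + b m)%Z) (ca + cb).
Proof.
  intros Ha Hb i. replace (vadd i (fun m => (a m + b m)%Z)) with (vadd (vadd i a) b).
  - rewrite Hb, Ha. ring.
  - apply functional_extensionality; intro m; unfold vadd; lia.
Qed.

Lemma shift_period_opp {d} (x : Config d) a c :
  shift_period x a c -> shift_period x (fun m => (- a m)%Z) (- c).
Proof.
  intros H i. set (i' := vadd i (fun m => (- a m)%Z)).
  assert (e : vadd i' a = i) by (apply functional_extensionality; intro m; unfold i', vadd; lia).
  specialize (H i'). rewrite e in H. lra.
Qed.

Lemma shift_period_ext {d} (x : Config d) a b c c' :
  shift_period x a c -> (forall m, a m = b m) -> c = c' -> shift_period x b c'.
Proof. intros H e <-. replace b with a; auto. apply functional_extensionality; auto. Qed.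

Lemma shift_period_mult {d} (x : Config d) a c (z : Z) :
  shift_period x a c -> shift_period x (fun m => (z * a m)%Z) (IZR z * c).
Proof.
  intros H.
  assert (Hn : forall k : nat, shift_period x (fun m => (Z.of_nat k * a m)%Z) (INR k * c)).
  { induction k.
    - eapply shift_period_ext. apply shift_period_0. intro; simpl; lia. simpl; ring.
    - eapply shift_period_ext. apply (shift_period_add _ _ _ _ _ IHk H).
      intro m; rewrite Nat2Z.inj_succ; lia. rewrite S_INR; ring. }
  destruct (Z_le_gt_dec 0 z).
  - eapply shift_period_ext. apply (Hn (Z.to_nat z)). intro; rewrite Z2Nat.id; auto.
    rewrite INR_IZR_INZ, Z2Nat.id; auto.
  - eapply shift_period_ext. apply shift_period_opp, (Hn (Z.to_nat (- z))).
    intro; rewrite Z2Nat.id; lia. rewrite INR_IZR_INZ, Z2Nat.id by lia. rewrite opp_IZR. ring.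
Qed.

Lemma shift_period_lincomb {d} (x : Config d) (p : Fin.t d -> Vec d) (c : Fin.t d -> R)
  (n : Fin.t d -> Z) l :
  (forall j, shift_period x (p j) (c j)) ->
  shift_period x (fun m => sumZ (map (fun j => (n j * p j m)%Z) l))
                 (sum_list (map (fun j => IZR (n j) * c j) l)).
Proof.
  intros H. induction l; simpl.
  - apply shift_period_0.
  - apply shift_period_add; auto. apply shift_period_mult; auto.
Qed.

Lemma Xpq_lattice {d} p q (x : Config d) n : Xpq p q x ->
  forall i, x (vadd i (lv p n)) = x i - IZR (lq q n).
Proof.
  intros H.
  assert (Hgen : forall j, shift_period x (p j) (IZR (q j))).
  { intros j i. pose proof (f_equal (fun f => f i) (H j)) as e. unfold tau in e. lra. }
  eapply shift_period_ext.
  - apply (shift_period_lincomb x p (fun j => IZR (q j)) n (enumFin d) Hgen).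
  - intro m. unfold lv. rewrite sumFinZ_list. reflexivity.
  - unfold lq. rewrite sumFinZ_list, IZR_sumZ. apply sum_map_ext. intros; rewrite mult_IZR; ring.
Qed.

Lemma potential_periodic {d} (S : Vec d -> Config d -> R) p q (x : Config d) n j :
  condB S -> Xpq p q x -> S (vadd j (lv p n)) x = S j x.
Proof.
  intros HB Hx. rewrite <- (HB j (lv p n) (lq q n) x). f_equal.
  apply functional_extensionality; intro i. unfold tau. rewrite (Xpq_lattice p q x n Hx). ring.
Qed.

(* With A a
   right inverse of the period matrix, coord A k are the real coordinates of
   k in the basis (p_j), cell A k their integer parts and rep p A k the
   remainder, which lies in B_p. *)
Definition coord {d} (A : Fin.t d -> Fin.t d -> R) (k : Vec d) (j : Fin.t d) : R :=
  sumFinR d (fun m' => A j m' * IZR (k m')).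

Definition cell {d} (A : Fin.t d -> Fin.t d -> R) (k : Vec d) : Fin.t d -> Z :=
  fun j => Int_part (coord A k j).

Definition rep {d} p A (k : Vec d) : Vec d := fun m => (k m - lv p (cell A k) m)%Z.

Lemma coord_spec {d} p A (k : Vec d) m : is_right_inverse p A ->
  sumFinR d (fun j => coord A k j * IZR (p j m)) = IZR (k m).
Proof.
  intros HA. unfold coord. rewrite sumFinR_list.
  rewrite (sum_map_ext _ (fun j => sum_list (map (fun m' => IZR (k m') * (IZR (p j m) * A j m'))
                                                   (enumFin d)))).
  2:{ intros j _. rewrite sumFinR_list, Rmult_comm, <- sum_map_scal.
      apply sum_map_ext; intros; ring. }
  rewrite sum_map_swap.
  rewrite (sum_map_ext _ (fun m' => IZR (k m') * (if Fin.eq_dec m m' then 1 else 0))).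
  - apply (sum_delta Fin.eq_dec (fun m0 => IZR (k m0))). apply enumFin_NoDup. apply enumFin_all.
  - intros m' _. rewrite <- (HA m m'), sumFinR_list, <- sum_map_scal. reflexivity.
Qed.

Lemma coord_unique {d} (p : Fin.t d -> Vec d) (t t' : Fin.t d -> R) : lin_indep p ->
  (forall m, sumFinR d (fun j => t j * IZR (p j m)) = sumFinR d (fun j => t' j * IZR (p j m))) ->
  forall j, t j = t' j.
Proof.
  intros Hl H j. enough (t j - t' j = 0) by lra.
  apply (Hl (fun j => t j - t' j)). intro m. specialize (H m).
  rewrite !sumFinR_list in *.
  rewrite (sum_map_ext _ (fun j => t j * IZR (p j m) - 1 * (t' j * IZR (p j m)))).
  - rewrite sum_map_lincomb. lra.
  - intros; ring.
Qed.

Lemma IZR_lv {d} p (n : Fin.t d -> Z) m :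
  IZR (lv p n m) = sumFinR d (fun j => IZR (n j) * IZR (p j m)).
Proof.
  unfold lv. rewrite sumFinZ_list, IZR_sumZ, sumFinR_list.
  apply sum_map_ext; intros; apply mult_IZR.
Qed.

Lemma rep_Bp {d} p A (k : Vec d) : is_right_inverse p A -> Bp p (rep p A k).
Proof.
  intros HA. exists (fun j => coord A k j - IZR (cell A k j)). split.
  - intro j. unfold cell. destruct (base_Int_part (coord A k j)). lra.
  - intro m. unfold rep. rewrite minus_IZR, IZR_lv, <- (coord_spec p A k m HA), !sumFinR_list.
    rewrite (sum_map_ext (fun j => (coord A k j - IZR (cell A k j)) * IZR (p j m))
      (fun j => coord A k j * IZR (p j m) - 1 * (IZR (cell A k j) * IZR (p j m)))).
    + rewrite sum_map_lincomb. ring.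
    + intros; ring.
Qed.

Lemma decomp {d} p A (k : Vec d) : vadd (rep p A k) (lv p (cell A k)) = k.
Proof. apply functional_extensionality; intro m; unfold vadd, rep; lia. Qed.

Lemma Int_part_shift (t : R) (n : Z) : 0 <= t < 1 -> Int_part (t + IZR n) = n.
Proof.
  intros H. unfold Int_part. rewrite <- (tech_up _ (n + 1)); rewrite ?plus_IZR; lra || lia.
Qed.

Lemma cell_translate {d} p A (b : Vec d) n : is_right_inverse p A -> lin_indep p -> Bp p b ->
  cell A (vadd b (lv p n)) = n.
Proof.
  intros HA Hl [t [Ht Hb]].
  assert (E : forall j, coord A (vadd b (lv p n)) j = t j + IZR (n j)).
  { apply (coord_unique p); auto. intro m. rewrite coord_spec; auto.
    unfold vadd. rewrite plus_IZR, IZR_lv, Hb, !sumFinR_list, <- sum_map_plus.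
    apply sum_map_ext; intros; ring. }
  apply functional_extensionality; intro j. unfold cell. rewrite E. apply Int_part_shift; auto.
Qed.

(* Nearby points lie in nearby cells: the cell index moves by less than
   K = up(alpha r + 1) within an r-ball, alpha being the l^1 norm of A. *)
Definition alphaA {d} (A : Fin.t d -> Fin.t d -> R) : R :=
  sumFinR d (fun j => sumFinR d (fun m => Rabs (A j m))).

Lemma alphaA_nonneg {d} (A : Fin.t d -> Fin.t d -> R) : 0 <= alphaA A.
Proof.
  unfold alphaA. rewrite sumFinR_list. apply sum_map_nonneg. intros j _.
  rewrite sumFinR_list. apply sum_map_nonneg; intros; apply Rabs_pos.
Qed.

Lemma alphaA_ge {d} (A : Fin.t d -> Fin.t d -> R) j m : Rabs (A j m) <= alphaA A.
Proof.
  unfold alphaA. rewrite sumFinR_list.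
  eapply Rle_trans.
  2:{ apply (sum_map_term_le (fun j => sumFinR d (fun m => Rabs (A j m)))).
      intros; rewrite sumFinR_list; apply sum_map_nonneg; intros; apply Rabs_pos.
      apply enumFin_all. }
  rewrite sumFinR_list. apply (sum_map_term_le (fun m => Rabs (A j m))).
  intros; apply Rabs_pos. apply enumFin_all.
Qed.

Lemma coord_bound {d} (A : Fin.t d -> Fin.t d -> R) (v : Vec d) j :
  Rabs (coord A v j) <= alphaA A * IZR (norm1 v).
Proof.
  unfold coord. rewrite IZR_norm1, !sumFinR_list. eapply Rle_trans. apply Rabs_sum_list.
  rewrite <- sum_map_scal. apply sum_map_le. intros m _. rewrite Rabs_mult.
  apply Rmult_le_compat_r. apply Rabs_pos. apply alphaA_ge.
Qed.

Lemma coord_sub {d} (A : Fin.t d -> Fin.t d -> R) (k i : Vec d) j :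
  coord A (vsub k i) j = coord A k j - coord A i j.
Proof.
  unfold coord, vsub. rewrite !sumFinR_list.
  rewrite (sum_map_ext _ (fun m => A j m * IZR (k m) - 1 * (A j m * IZR (i m)))).
  - rewrite sum_map_lincomb. ring.
  - intros; rewrite minus_IZR; ring.
Qed.

Definition cell_radius {d} (A : Fin.t d -> Fin.t d -> R) (r : R) : Z := up (alphaA A * r + 1).

Lemma cell_radius_pos {d} (A : Fin.t d -> Fin.t d -> R) r : 0 <= r -> (1 <= cell_radius A r)%Z.
Proof.
  intros Hr. unfold cell_radius. destruct (archimed (alphaA A * r + 1)) as [H1 _].
  assert (0 <= alphaA A * r) by (apply Rmult_le_pos; auto; apply alphaA_nonneg).
  apply le_IZR. lra.
Qed.

Lemma near_cell {d} (A : Fin.t d -> Fin.t d -> R) r (i k : Vec d) j :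
  ball i r k -> (Z.abs (cell A k j - cell A i j) < cell_radius A r)%Z.
Proof.
  unfold ball. intros Hb. unfold cell, cell_radius.
  pose proof (coord_bound A (vsub k i) j) as Hbd. rewrite coord_sub in Hbd.
  destruct (base_Int_part (coord A k j)) as [Ha1 Ha2].
  destruct (base_Int_part (coord A i j)) as [Hb1 Hb2].
  destruct (archimed (alphaA A * r + 1)) as [Hu _].
  assert (alphaA A * IZR (norm1 (vsub k i)) <= alphaA A * r).
  { apply Rmult_le_compat_l; auto. apply alphaA_nonneg. }
  assert (Hx : Rabs (coord A k j - coord A i j) <= alphaA A * r) by lra.
  apply Z.abs_lt. split; apply lt_IZR; rewrite ?minus_IZR, ?opp_IZR;
  unfold Rabs in Hx; destruct (Rcase_abs (coord A k j - coord A i j)); lra.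
Qed.

(* B_p is finite: its points are bounded by the l^1 size of p.  Hence the
   enumeration lBp p, over which W_{p,q} sums by definition, is a
   duplicate-free list of B_p. *)
Definition period_size {d} (p : Fin.t d -> Vec d) : Z :=
  sumZ (map (fun m => sumZ (map (fun j => Z.abs (p j m)) (enumFin d))) (enumFin d)).

Lemma Bp_bounded {d} (p : Fin.t d -> Vec d) b :
  Bp p b -> forall m, (Z.abs (b m) <= period_size p)%Z.
Proof.
  intros [t [Ht Hb]] m.
  apply Z.le_trans with (sumZ (map (fun j => Z.abs (p j m)) (enumFin d))).
  - apply le_IZR. rewrite abs_IZR, Hb, IZR_sumZ, sumFinR_list.
    eapply Rle_trans. apply Rabs_sum_list. apply sum_map_le. intros j _.
    rewrite Rabs_mult, abs_IZR. specialize (Ht j). rewrite (Rabs_right (t j)) by lra.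
    assert (0 <= Rabs (IZR (p j m))) by apply Rabs_pos. nra.
  - unfold period_size.
    apply (sumZ_term_le (fun m => sumZ (map (fun j => Z.abs (p j m)) (enumFin d)))).
    + intros. apply le_IZR. rewrite IZR_sumZ. apply sum_map_nonneg. intros; apply IZR_le; lia.
    + apply enumFin_all.
Qed.

Definition lBp {d} (p : Fin.t d -> Vec d) : list (Vec d) :=
  epsilon (inhabits (@nil (Vec d))) (fun l => NoDup l /\ forall j, In j l <-> Bp p j).

Lemma lBp_spec {d} (p : Fin.t d -> Vec d) : NoDup (lBp p) /\ forall j, In j (lBp p) <-> Bp p j.
Proof.
  unfold lBp. apply epsilon_spec.
  exists (filter (fun k => decb (Bp p k)) (boxlist (- period_size p) (period_size p + 1) d)).
  split.
  - apply NoDup_filter, boxlist_NoDup.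
  - intro j. rewrite filter_In, decb_true. split. tauto.
    intros H; split; auto. apply boxlist_In. intro m. pose proof (Bp_bounded p j H m). lia.
Qed.

Lemma pow_diff_le (a b : R) (e : nat) : 0 <= b <= a ->
  a ^ (S e) - b ^ (S e) <= INR (S e) * (a - b) * a ^ e.
Proof.
  intros [Hb Hab]. induction e.
  - simpl. lra.
  - assert (b ^ S e <= a ^ S e) by (apply pow_incr; lra).
    assert (0 <= a ^ e) by (apply pow_le; lra).
    replace (a ^ S (S e) - b ^ S (S e)) with (a * (a ^ S e - b ^ S e) + (a - b) * b ^ S e)
      by (simpl; ring).
    rewrite !S_INR in *.
    assert (a * (a ^ S e - b ^ S e) <= a * ((INR e + 1) * (a - b) * a ^ e))
      by (apply Rmult_le_compat_l; lra).
    assert ((a - b) * b ^ S e <= (a - b) * a ^ S e) by (apply Rmult_le_compat_l; lra).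
    cbn [pow] in *. lra.
Qed.

Lemma boundary_negligible (d : nat) (c dl C : R) : 0 <= c -> 0 < dl -> 0 <= C ->
  exists M : nat, C * ((INR M + c) ^ d - INR M ^ d) < dl * INR M ^ d.
Proof.
  intros Hc Hd HC. destruct d as [|e].
  { exists 1%nat. simpl. lra. }
  set (T := INR (S e) * c * 2 ^ e * C / dl).
  assert (HT : 0 <= T).
  { unfold T. apply Rmult_le_pos. 2: left; apply Rinv_0_lt_compat; auto.
    repeat apply Rmult_le_pos; auto. apply pos_INR. apply pow_le; lra. }
  destruct (archimed (T + c + 1)) as [Hu _].
  assert (Hup : (0 <= up (T + c + 1))%Z) by (apply le_IZR; lra).
  exists (Z.to_nat (up (T + c + 1))).
  rewrite INR_IZR_INZ, Z2Nat.id by auto.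
  set (m := IZR (up (T + c + 1))) in *.
  assert (Hme : 0 < m ^ e) by (apply pow_lt; lra).
  pose proof (pow_diff_le (m + c) m e ltac:(lra)) as H1.
  assert (H2 : (m + c) ^ e <= (2 * m) ^ e) by (apply pow_incr; lra).
  rewrite Rpow_mult_distr in H2.
  assert (H3 : C * ((m + c) ^ S e - m ^ S e) <= C * (INR (S e) * c * (2 ^ e * m ^ e))).
  { apply Rmult_le_compat_l; auto. eapply Rle_trans. apply H1.
    replace (m + c - m) with c by ring.
    assert (0 <= INR (S e) * c) by (apply Rmult_le_pos; auto; apply pos_INR).
    apply Rmult_le_compat_l; auto. }
  assert (H4 : C * (INR (S e) * c * (2 ^ e * m ^ e)) = T * dl * m ^ e) by (unfold T; field; lra).
  assert (H5 : T * dl * m ^ e < dl * m ^ S e).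
  { simpl. assert (T < m) by lra. assert (0 < dl * m ^ e) by (apply Rmult_lt_0_compat; auto). nra. }
  lra.
Qed.

(* For a box size M, the cells are the indices
   n in [0, N)^d with N = M + 4K; the block is the union of the translates
   B_p + p n over the cells; the glued perturbation is y - x on the sites
   whose cell is at distance >= K from the boundary of the box, and 0
   elsewhere. *)
Section Gluing.
Variables (d : nat) (r : R) (S : Vec d -> Config d -> R).
Variables (p : Fin.t d -> Vec d) (q : Fin.t d -> Z) (A : Fin.t d -> Fin.t d -> R).
Variables (x y : Config d).
Hypothesis Hr : 0 <= r.
Hypothesis Hloc : forall j z w, (forall k, ball j r k -> z k = w k) -> S j z = S j w.
Hypothesis HB : condB S.
Hypothesis Hl : lin_indep p.
Hypothesis HA : is_right_inverse p A.
Hypothesis Hx : Xpq p q x.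
Hypothesis Hy : Xpq p q y.

Local Notation K := (cell_radius A r).
Local Notation lB := (lBp p).

Definition delta : Config d := fun i => y i - x i.

Lemma delta_periodic n i : delta (vadd i (lv p n)) = delta i.
Proof. unfold delta. rewrite (Xpq_lattice p q x n Hx), (Xpq_lattice p q y n Hy). ring. Qed.

Definition indicator (P : Vec d -> Prop) (f : Config d) : Config d :=
  fun i => if excluded_middle_informative (P i) then f i else 0.

Definition patch (P : Vec d -> Prop) : Config d := cfg_add x (indicator P delta).

(* Only finitely many patches are seen by the potentials S_b, b in B_p. *)
Definition pattern_max : R :=
  maxlist (flat_map (fun b => map (fun s => S b (patch (fun i => In i s)))
                                  (sublists (ballList b r))) lB).

Lemma patch_bound b (P : Vec d -> Prop) : In b lB -> S b (patch P) <= pattern_max.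
Proof.
  intros Hb. set (s := filter (fun i => decb (P i)) (ballList b r)).
  rewrite (Hloc b _ (patch (fun i => In i s))).
  - apply maxlist_ge, in_flat_map. exists b. split; auto.
    apply in_map_iff. exists s. split; auto. apply filter_in_sublists.
  - intros k Hk. unfold patch, cfg_add, indicator, s.
    assert (HPs : P k <-> In k (filter (fun i => decb (P i)) (ballList b r))).
    { rewrite filter_In, decb_true. split; [|tauto]. split; auto. apply ballList_In; auto. }
    do 2 destruct excluded_middle_informative; tauto || reflexivity.
Qed.

Definition box_side (M : nat) : Z := (Z.of_nat M + 4 * K)%Z.

Definition cells (M : nat) : list (Fin.t d -> Z) := boxlist 0 (box_side M) d.

Definition inner_cell (M : nat) (n : Fin.t d -> Z) : Prop :=
  forall j, (K <= n j < box_side M - K)%Z.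

Definition deep_cell (M : nat) (n : Fin.t d -> Z) : Prop :=
  forall j, (2 * K <= n j < box_side M - 2 * K)%Z.

Definition block (M : nat) : list (Vec d) :=
  flat_map (fun n => map (fun b => vadd b (lv p n)) lB) (cells M).

Definition inner_sites (M : nat) (i : Vec d) : Prop := inner_cell M (cell A i).

Definition glued (M : nat) : Config d := patch (inner_sites M).

Lemma cell_of_translate b n : In b lB -> cell A (vadd b (lv p n)) = n.
Proof. intros Hb. apply cell_translate; auto. apply lBp_spec; auto. Qed.

Lemma block_In M k : (forall j, (0 <= cell A k j < box_side M)%Z) -> In k (block M).
Proof.
  intros Hk. apply in_flat_map. exists (cell A k). split.
  - apply boxlist_In; auto.
  - apply in_map_iff. exists (rep p A k). split. apply decomp. apply lBp_spec, rep_Bp; auto.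
Qed.

Lemma block_NoDup M : NoDup (block M).
Proof.
  apply NoDup_flat_map. apply boxlist_NoDup.
  - intros n _. apply NoDup_map_inj. 2: apply lBp_spec.
    intros b b' _ _ e. apply functional_extensionality; intro m.
    pose proof (f_equal (fun f => f m) e) as e'. unfold vadd in e'. lia.
  - intros n n' v _ _ H1 H2. apply in_map_iff in H1 as [b [<- Hb]].
    apply in_map_iff in H2 as [b' [e Hb']].
    rewrite <- (cell_of_translate b n Hb), <- (cell_of_translate b' n' Hb'), e. reflexivity.
Qed.

Lemma glued_supported M i :
  indicator (inner_sites M) delta i <> 0 -> Defs.interior r (block M) i.
Proof.
  assert (HK := cell_radius_pos A r Hr).
  unfold indicator, inner_sites. destruct excluded_middle_informative as [Hin|]; [intros _|lra].
  split.
  - apply block_In. intro j. specialize (Hin j). lia.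
  - intros k Hk. apply block_In. intro j. specialize (Hin j).
    pose proof (near_cell A r i k j Hk). lia.
Qed.

Lemma cell_energy_x n : sum_list (map (fun b => S (vadd b (lv p n)) x) lB) = Wpq S p x.
Proof. apply sum_map_ext. intros b _. apply (potential_periodic S p q); auto. Qed.

Lemma cell_energy_deep M n : deep_cell M n ->
  sum_list (map (fun b => S (vadd b (lv p n)) (glued M)) lB) = Wpq S p y.
Proof.
  intros Hdeep. apply sum_map_ext. intros b Hb.
  rewrite <- (potential_periodic S p q y n b HB Hy). apply Hloc. intros k Hk.
  unfold glued, patch, cfg_add, indicator, inner_sites, delta.
  destruct excluded_middle_informative as [|Hno]; [ring|].
  exfalso. apply Hno. intro j. pose proof (near_cell A r _ k j Hk) as Hnear.
  rewrite cell_of_translate in Hnear by auto. specialize (Hdeep j). lia.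
Qed.

Lemma cell_energy_bound M n :
  sum_list (map (fun b => S (vadd b (lv p n)) (glued M)) lB) <= INR (length lB) * pattern_max.
Proof.
  rewrite <- sum_map_const. apply sum_map_le. intros b Hb. rewrite <- HB.
  replace (tau (lv p n) (lq q n) (glued M))
    with (patch (fun i => inner_sites M (vadd i (lv p n)))).
  - apply patch_bound; auto.
  - apply functional_extensionality; intro i. unfold tau, glued, patch, cfg_add, indicator.
    rewrite (Xpq_lattice p q x n Hx), delta_periodic. ring.
Qed.

Lemma count_cells M : INR (length (cells M)) = (INR M + IZR (4 * K)) ^ d.
Proof.
  assert (HK := cell_radius_pos A r Hr).
  unfold cells, box_side. rewrite boxlist_length, pow_INR. f_equal.
  rewrite Z.sub_0_r, Z2Nat.inj_add, plus_INR, Nat2Z.id by lia.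
  rewrite (INR_IZR_INZ (Z.to_nat _)), Z2Nat.id by lia. reflexivity.
Qed.

Lemma count_deep M : INR (length (filter (fun n => decb (deep_cell M n)) (cells M))) = INR M ^ d.
Proof.
  assert (HK := cell_radius_pos A r Hr).
  unfold cells, deep_cell. rewrite filter_boxlist_length by lia.
  rewrite boxlist_length, pow_INR. f_equal. f_equal. unfold box_side. lia.
Qed.

Lemma energy_block_x M :
  W_B S (block M) x = (INR M + IZR (4 * K)) ^ d * Wpq S p x.
Proof.
  unfold W_B, block. rewrite sum_flat_map, <- count_cells, <- sum_map_const.
  apply sum_map_ext. intros n _. rewrite map_map. apply cell_energy_x.
Qed.

Lemma energy_block_glued M :
  W_B S (block M) (glued M) <=
    INR M ^ d * Wpq S p y +
    INR (length lB) * pattern_max * ((INR M + IZR (4 * K)) ^ d - INR M ^ d).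
Proof.
  unfold W_B, block. rewrite sum_flat_map, <- count_cells, <- count_deep.
  eapply Rle_trans.
  - apply (sum_split_bound _ (fun n => decb (deep_cell M n))). intros n _.
    rewrite map_map. destruct (decb (deep_cell M n)) eqn:Hdeep.
    + apply cell_energy_deep, decb_true; auto.
    + apply cell_energy_bound.
  - lra.
Qed.

Lemma glued_energy_inequality M : global_minimizer r S x ->
  (INR M + IZR (4 * K)) ^ d * Wpq S p x <=
    INR M ^ d * Wpq S p y +
    INR (length lB) * pattern_max * ((INR M + IZR (4 * K)) ^ d - INR M ^ d).
Proof.
  intros Hgm. rewrite <- energy_block_x.
  eapply Rle_trans; [|apply energy_block_glued].
  apply Hgm. apply block_NoDup. apply glued_supported.
Qed.

End Gluing.

(* If W_{p,q}(y) < W_{p,q}(x), the gluing inequality for a box with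
   negligible boundary layer is violated. *)
Theorem mainTheorem6 (d : nat) (r : R) (S : Vec d -> Config d -> R)
  (p : Fin.t d -> Vec d) (q : Fin.t d -> Z) (x : Config d) :
  condA r S -> condB S -> condC S -> condD S -> condE S ->
  lin_indep p ->
  Xpq p q x -> global_minimizer r S x ->
  forall y : Config d, Xpq p q y -> Wpq S p x <= Wpq S p y.
Proof.
  intros [Hr Hlocal] HB _ _ _ Hl Hx Hgm y Hy.
  assert (Hloc : forall j z w, (forall k, ball j r k -> z k = w k) -> S j z = S j w)
    by (intros j; apply (proj1 (Hlocal j))).
  destruct (PeriodMatrix.right_inverse_exists d p Hl) as [A HA].
  apply Rnot_lt_le; intros Hlt.
  set (c := IZR (4 * cell_radius A r)).
  set (Cst := INR (length (lBp p)) * pattern_max d r S p x y).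
  assert (Hc : 0 <= c) by (apply IZR_le; pose proof (cell_radius_pos A r (Rlt_le _ _ Hr)); lia).
  destruct (boundary_negligible d c (Wpq S p x - Wpq S p y) (Rmax (Cst - Wpq S p x) 0) Hc)
    as [M HM]; [lra|apply Rmax_r|].
  pose proof (glued_energy_inequality d r S p q A x y (Rlt_le _ _ Hr) Hloc HB Hl HA Hx Hy M Hgm)
    as Hglue.
  fold c Cst in Hglue.
  set (m := INR M) in *.
  assert (Hlayer : 0 <= (m + c) ^ d - m ^ d).
  { assert (m ^ d <= (m + c) ^ d) by (apply pow_incr; unfold m; pose proof (pos_INR M); lra). lra. }
  assert (((m + c) ^ d - m ^ d) * (Cst - Wpq S p x) <=
          ((m + c) ^ d - m ^ d) * Rmax (Cst - Wpq S p x) 0)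
    by (apply Rmult_le_compat_l; [lra|apply Rmax_l]).
  nra.
Qed.
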